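(* Let $D$ be a smooth regular distribution with unbounded virtual value function. Suppose a generalized position auction with single-agent allocation rules $(x^{(t)})_{t\in\mathbb N}$ satisfies, for all $t\in\mathbb N$ and $w\ge0$, $$t\,(x^{(t)}(w)-x^{(t+1)}(w))\ge(t+1)\,(x^{(t+1)}(w)-x^{(t+2)}(w)),$$ and, for all $t\in\mathbb N$ and $w\ge\varphi^{-1}(0)$, $$t\int_{\varphi^{-1}(0)}^{w}\bigl(x^{(t)}(z)-x^{(t+1)}(z)\bigr)dz\le\varphi(w)x^{(t+1)}(w)-\int_{\varphi^{-1}(0)}^{w}x^{(t+1)}(z)\,d\varphi(z).$$ Then the mechanism is on-chain miner simple (and hence simple to participate).
   Context: Users ($n\in\mathbb N$ arbitrary) have private values drawn i.i.d. from $D$ on $\mathbb R_{\ge0}$ with CDF $F$, density $f$, virtual value $\varphi(v)=v-\frac{1-F(v)}{f(v)}$; $D$ smooth regular means $\varphi$ non-decreasing and continuous with $\Pr[\varphi(v)\le0]>0$; $\varphi^{-1}(\phi)$ denotes the supremum of values $v$ with $\varphi(v)<\phi$. $\int_{\varphi^{-1}(0)}^{w}g(z)\,d\varphi(z)$ is the Riemann–Stieltjes integral with respect to $\varphi$. A generalized position auction (a prior-dependent plaintext TFM with infinite block, no advice) is given by functions $x^{(t)}:\mathbb R_{\ge0}\to[0,1]$, each non-decreasing, with $x^{(t)}(v)\ge x^{(t+1)}(v)$ and $x^{(t)}(v)=0$ when $\varphi(v)<0$; with bids sorted $v^{(1)}\ge\dots\ge v^{(n)}$ and $v^{(n+1)}:=\varphi^{-1}(0)$,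 user $(i)$ is allocated with probability $x^{(i)}(v^{(i)})$ and pays $v^{(i)}x^{(i)}(v^{(i)})-\sum_{j=i}^n\int_{v^{(j+1)}}^{v^{(j)}}x^{(j)}(z)dz$, and the burn is $\sum_{i=1}^n\bigl[\varphi(v^{(i)})x^{(i)}(v^{(i)})-\int_{\varphi^{-1}(0)}^{v^{(i)}}x^{(i)}(z)\,d\varphi(z)\bigr]$; such mechanisms are on-chain user simple and off-chain influence proof. On-chain miner simple: given truthful bids, the miner (who sees bids and may censor bids and insert fabricated bids, earning real users' payments minus burn) maximizes revenue by never censoring or fabricating, for every bid profile. Simple to participate: on-chain user simple, on-chain miner simple and off-chain influence proof. *)

From Stdlib Require Import Reals List Sorting.Sorted Permutation ClassicalEpsilon.
From Coquelicot Require Import Coquelicot.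
Open Scope R_scope.

Definition sumR (f : nat -> R) (a len : nat) : R :=
  fold_right Rplus 0 (map f (seq a len)).

Definition tagged_partition (a b : R) (m : nat) (p xi : nat -> R) : Prop :=
  p 0%nat = a /\ p m = b /\
  (forall i, (i < m)%nat -> p i <= xi i <= p (S i)).

Definition mesh_lt (m : nat) (p : nat -> R) (d : R) : Prop :=
  forall i, (i < m)%nat -> p (S i) - p i < d.

Definition RS_sum (g phi : R -> R) (m : nat) (p xi : nat -> R) : R :=
  sumR (fun i => g (xi i) * (phi (p (S i)) - phi (p i))) 0 m.

Definition is_RS_integral (g phi : R -> R) (a b I : R) : Prop :=
  forall eps, 0 < eps -> exists delta, 0 < delta /\
    forall m p xi, tagged_partition a b m p xi -> mesh_lt m p delta ->
      Rabs (RS_sum g phi m p xi - I) < eps.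

Definition RS_int_ord (g phi : R -> R) (a b : R) : R :=
  match excluded_middle_informative (exists I, is_RS_integral g phi a b I) with
  | left H => proj1_sig (constructive_indefinite_description _ H)
  | right _ => 0
  end.

Definition RS_int (g phi : R -> R) (a b : R) : R :=
  if Rle_dec a b then RS_int_ord g phi a b else - RS_int_ord g phi b a.

Definition is_distribution (F f : R -> R) : Prop :=
  (forall v, 0 <= f v) /\
  (forall v, 0 <= v -> ex_RInt f 0 v /\ F v = RInt f 0 v) /\
  is_lim F p_infty 1.

Definition virtual_value (F f : R -> R) (v : R) : R :=
  v - (1 - F v) / f v.

(* smooth regular: phi non-decreasing and continuous (on the value domain
   R_{>=0}) and Pr[phi(v) <= 0] > 0.  Since phi is non-decreasing,
   {v >= 0 | phi v <= 0} is an initial interval of R_{>=0}, so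
   Pr[phi(v) <= 0] > 0 iff some c >= 0 with phi <= 0 on [0,c] has F c > 0. *)
Definition smooth_regular (F f : R -> R) : Prop :=
  let phi := virtual_value F f in
  (forall v w, 0 <= v -> v <= w -> phi v <= phi w) /\
  (forall v, 0 <= v ->
     filterlim phi (within (fun y => 0 <= y) (locally v)) (locally (phi v))) /\
  (exists c, 0 <= c /\ (forall v, 0 <= v <= c -> phi v <= 0) /\ 0 < F c).

Definition unbounded_virtual_value (F f : R -> R) : Prop :=
  forall M, exists v, 0 <= v /\ M < virtual_value F f v.

(* phi^{-1}(y) = sup { v >= 0 | phi v < y }  (0 if that set is empty) *)
Definition phi_inv (phi : R -> R) (y : R) : R :=
  real (Lub_Rbar (fun v => 0 <= v /\ phi v < y)).

(* x t is the allocation rule of position t, t = 1, 2, ... (x 0 is unused) *)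
Definition is_GPA (phi : R -> R) (x : nat -> R -> R) : Prop :=
  forall t, (1 <= t)%nat ->
    (forall v, 0 <= v -> 0 <= x t v <= 1) /\
    (forall v w, 0 <= v -> v <= w -> x t v <= x t w) /\
    (forall v, 0 <= v -> x (S t) v <= x t v) /\
    (forall v, 0 <= v -> phi v < 0 -> x t v = 0).

(* For a list l of bids sorted in non-increasing order, the bid of position
   t = k+1 is nth k l r, and nth n l r = r = phi^{-1}(0) = v^(n+1). *)

(* payment of the user at (0-based) index k, i.e. position k+1 *)
Definition gpa_payment (x : nat -> R -> R) (r : R) (l : list R) (k : nat) : R :=
  nth k l r * x (S k) (nth k l r)
  - sumR (fun j => RInt (x (S j)) (nth (S j) l r) (nth j l r))
         k (length l - k).

Definition gpa_burn (phi : R -> R) (x : nat -> R -> R) (r : R) (l : list R) : R :=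
  sumR (fun k => phi (nth k l r) * x (S k) (nth k l r)
                 - RS_int (x (S k)) phi r (nth k l r))
       0 (length l).

(* A block built by the miner: an ordered list of bids, each flagged as
   coming from a real user (true) or fabricated (false).  The miner's
   revenue is the real users' payments minus the total burn. *)
Definition miner_revenue (phi : R -> R) (x : nat -> R -> R)
    (blk : list (R * bool)) : R :=
  let r := phi_inv phi 0 in
  let l := map fst blk in
  sumR (fun k => if snd (nth k blk (0, false)) then gpa_payment x r l k else 0)
       0 (length blk)
  - gpa_burn phi x r l.

(* blk is a feasible block for true bids b: sorted non-increasingly, the
   real entries form a sub-multiset of b (censoring), and the fabricated
   entries are arbitrary non-negative bids. Ties may be ordered arbitrarily. *)
Definition feasible_block (b : list R) (blk : list (R * bool)) : Prop :=
  Sorted Rge (map fst blk) /\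
  (exists rest, Permutation b (map fst (filter snd blk) ++ rest)) /\
  (forall e, In e blk -> snd e = false -> 0 <= fst e).

Definition honest_block (b : list R) (blk : list (R * bool)) : Prop :=
  Sorted Rge (map fst blk) /\
  Permutation b (map fst blk) /\
  (forall e, In e blk -> snd e = true).

Definition on_chain_miner_simple (phi : R -> R) (x : nat -> R -> R) : Prop :=
  forall (b : list R), (forall v, In v b -> 0 <= v) ->
  forall blk hon, feasible_block b blk -> honest_block b hon ->
    miner_revenue phi x blk <= miner_revenue phi x hon.

(* The burn integral against phi is rewritten, by the change of variables
   s = phi z, as an ordinary integral of x o phi^-1 over [phi r, phi v]; this
   makes the per-position quantities (areas under x, burns, and the payment
   minus burn of a bid at the last position) monotone in the bid.  Summing the
   payments by parts, the miner's revenue is a sum of one term per block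
   entry, depending on its position, on whether it is real, and on the number
   of real bids above it.  Deleting the lowest fabricated bid y never lowers
   the revenue: its burn exceeds, by the second hypothesis, the weighted area
   gap it imposes on the real bids above, and by the first hypothesis this
   also bounds what the real bids below gain by moving up.  Once only real
   bids remain, the honest revenue is monotone in the sorted bid vector and
   in its length, and a censored set of true bids is dominated entrywise by
   the full one. *)

From Stdlib Require Import Reals Lra Lia ZArith List Sorted Permutation RelationClasses Classical ClassicalEpsilon.
From Coquelicot Require Import Coquelicot.
Open Scope R_scope.

(** * Monotone functions are Riemann integrable *)

Lemma Riemann_integrable_StepFun (a b : R) (s : StepFun a b) : Riemann_integrable s a b.
Proof.
  intro eps. exists s, (mkStepFun (StepFun_P4 a b 0)). split.
  - intros t _. simpl. unfold fct_cte. rewrite Rminus_diag, Rabs_R0. lra.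
  - rewrite StepFun_P18, Rmult_0_l, Rabs_R0. apply cond_pos.
Qed.

Lemma Riemann_integrable_unif_approx (f : R -> R) (a b : R) : a <= b ->
  (forall eps : posreal, { g : R -> R &
     (Riemann_integrable g a b * (forall t, a <= t <= b -> Rabs (f t - g t) <= eps))%type }) ->
  Riemann_integrable f a b.
Proof.
  intros Hab H eps.
  assert (He2 : 0 < eps / 2) by (generalize (cond_pos eps); lra).
  assert (He3 : 0 < eps / (2 * (b - a + 1))).
  { apply Rdiv_lt_0_compat; [apply cond_pos | lra]. }
  destruct (H (mkposreal _ He3)) as [g [Hg Hfg]].
  destruct (Hg (mkposreal _ He2)) as [phi [psi [H1 H2]]].
  exists phi, (mkStepFun (StepFun_P28 1 psi
                 (mkStepFun (StepFun_P4 a b (eps / (2 * (b - a + 1))))))).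
  split.
  - intros t Ht. simpl. unfold fct_cte.
    rewrite Rmin_left, Rmax_right in Ht by lra.
    specialize (H1 t ltac:(rewrite Rmin_left, Rmax_right by lra; exact Ht)).
    specialize (Hfg t Ht). simpl in Hfg.
    replace (f t - phi t) with ((f t - g t) + (g t - phi t)) by ring.
    eapply Rle_trans; [apply Rabs_triang | lra].
  - rewrite StepFun_P30, StepFun_P18. simpl in H2.
    eapply Rle_lt_trans; [apply Rabs_triang |].
    rewrite Rmult_1_l.
    assert (Habs : Rabs (eps / (2 * (b - a + 1)) * (b - a)) <= eps / 2).
    { rewrite Rabs_pos_eq by (apply Rmult_le_pos; lra).
      replace (eps / (2 * (b - a + 1)) * (b - a))
        with ((eps / 2) * ((b - a) / (b - a + 1))) by (field; lra).
      assert ((b - a) / (b - a + 1) <= 1).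
      { apply Rmult_le_reg_r with (b - a + 1); [lra |].
        unfold Rdiv. rewrite Rmult_assoc, Rinv_l by lra. lra. }
      generalize (cond_pos eps); nra. }
    lra.
Qed.

Definition level_indicator (c : R) (f : R -> R) (t : R) : R :=
  if Rle_dec c (f t) then 1 else 0.

Lemma lub_approx (E : R -> Prop) (a b : R) : E a -> (forall t, E t -> t <= b) ->
  { tau : R | a <= tau <= b /\ (forall t, E t -> t <= tau) /\
             (forall t, t < tau -> exists t', E t' /\ t < t') }.
Proof.
  intros Ha Hb.
  destruct (completeness E) as [m [Hm1 Hm2]].
  - exists b. intros t Ht. apply Hb, Ht.
  - exists a; exact Ha.
  - exists m. split; [split | split].
    + apply Hm1, Ha.
    + apply Hm2. intros t Ht. apply Hb, Ht.
    + exact Hm1.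
    + intros t Ht. apply NNPP. intro Hn.
      assert (m <= t); [| lra].
      apply Hm2. intros t' Ht'. apply Rnot_lt_le. intro Hc. apply Hn. exists t'. auto.
Qed.

(* The level set {f >= c} of a nondecreasing f is an interval ending at b, with
   left end point tau = sup {t | f t < c}: two steps. *)
Lemma level_indicator_IsStepFun (f : R -> R) (a b c : R) : a <= b ->
  (forall u v, a <= u -> u <= v -> v <= b -> f u <= f v) ->
  IsStepFun (level_indicator c f) a b.
Proof.
  intros Hab Hf.
  destruct (lub_approx (fun t => a <= t <= b /\ (t = a \/ f t < c)) a b)
    as [tau [Htau [Hub Hlt]]].
  - split; [lra | now left].
  - intros t [Ht _]; lra.
  - exists (a :: tau :: b :: nil), (0 :: 1 :: nil).
    unfold adapted_couple. rewrite Rmin_left, Rmax_right by lra.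
    split; [| split; [reflexivity | split; [reflexivity | split; [reflexivity |]]]].
    + intros i Hi. simpl in Hi. destruct i as [| [| i]]; simpl; lra || lia.
    + intros i Hi. simpl in Hi. unfold constant_D_eq, open_interval.
      destruct i as [| [| i]]; simpl; try lia; intros t Ht; unfold level_indicator.
      * destruct (Rle_dec c (f t)) as [Hc | Hc]; [exfalso | reflexivity].
        destruct (Hlt t (proj2 Ht)) as [t' [[Ht'1 [Ht'2 | Ht'2]] Ht'3]]; [lra |].
        assert (f t <= f t') by (apply Hf; lra). lra.
      * destruct (Rle_dec c (f t)) as [Hc | Hc]; [reflexivity | exfalso].
        assert (t <= tau) by (apply Hub; split; [lra | right; lra]). lra.
Qed.

(* [c0 + staircase f c0 h m t] rounds [f t] down to the grid [c0 + h Z], capped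
   at [c0 + m h]. *)
Fixpoint staircase (f : R -> R) (c0 h : R) (m : nat) (t : R) : R :=
  match m with
  | O => 0
  | S m' => staircase f c0 h m' t + h * level_indicator (c0 + INR (S m') * h) f t
  end.

Lemma staircase_integrable (f : R -> R) (a b c0 h : R) (m : nat) : a <= b ->
  (forall u v, a <= u -> u <= v -> v <= b -> f u <= f v) ->
  Riemann_integrable (fun t => c0 + staircase f c0 h m t) a b.
Proof.
  intros Hab Hf. induction m as [| m IH]; cbn [staircase].
  - apply Riemann_integrable_ext with (fct_cte c0).
    + intros; unfold fct_cte; ring.
    + apply RiemannInt_P14.
  - apply Riemann_integrable_ext with
      (fun t => (c0 + staircase f c0 h m t)
                + h * level_indicator (c0 + INR (S m) * h) f t).
    + intros. ring.
    + apply RiemannInt_P10; [exact IH |].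
      exact (Riemann_integrable_StepFun a b (mkStepFun (level_indicator_IsStepFun f a b _ Hab Hf))).
Qed.

Lemma staircase_spec (f : R -> R) (c0 h t : R) : 0 < h -> c0 <= f t ->
  forall m, exists k : nat, (k <= m)%nat /\ staircase f c0 h m t = INR k * h /\
    INR k * h <= f t - c0 /\ (k = m \/ f t - c0 < (INR k + 1) * h).
Proof.
  intros Hh Hc m. induction m as [| m IH].
  - exists 0%nat. cbn [staircase INR]. split; [lia | split; [ring | split; [lra | now left]]].
  - destruct IH as [k [Hk1 [Hk2 [Hk3 Hk4]]]]. cbn [staircase].
    rewrite Hk2. unfold level_indicator.
    destruct (Rle_dec (c0 + INR (S m) * h) (f t)) as [Hle | Hnle].
    + assert (k = m).
      { destruct Hk4 as [Hk4 | Hk4]; auto. exfalso.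
        assert (INR k <= INR m) by (apply le_INR; lia).
        assert ((INR k + 1) * h <= (INR m + 1) * h) by (apply Rmult_le_compat_r; lra).
        rewrite S_INR in Hle. lra. }
      subst k. exists (S m). rewrite S_INR in *.
      split; [lia | split; [ring | split; [lra | now left]]].
    + exists k. split; [lia | split; [ring | split; [lra |]]].
      right. destruct Hk4 as [Hk4 | Hk4]; auto. subst k. rewrite S_INR in Hnle. lra.
Qed.

Lemma Riemann_integrable_nondecreasing (f : R -> R) (a b : R) : a <= b ->
  (forall u v, a <= u -> u <= v -> v <= b -> f u <= f v) ->
  Riemann_integrable f a b.
Proof.
  intros Hab Hf. apply Riemann_integrable_unif_approx; auto. intro eps.
  set (D := f b - f a).
  assert (HD : 0 <= D) by (unfold D; assert (f a <= f b) by (apply Hf; lra); lra).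
  set (n := Z.to_nat (up (D / eps))).
  assert (HnD : D <= INR n * eps).
  { destruct (archimed (D / eps)) as [Ha _].
    assert (0 <= D / eps) by (apply Rdiv_le_0_compat; [lra | apply cond_pos]).
    assert (Hn : D / eps < INR n).
    { unfold n. destruct (Z_lt_le_dec (up (D / eps)) 0) as [Hz | Hz].
      - assert (IZR (up (D / eps)) < 0) by (apply IZR_lt; lia). lra.
      - rewrite INR_IZR_INZ, Z2Nat.id by lia. lra. }
    generalize (cond_pos eps); intro He.
    apply Rmult_lt_compat_r with (r := eps) in Hn; auto.
    unfold Rdiv in Hn. rewrite Rmult_assoc, Rinv_l in Hn by lra. lra. }
  exists (fun t => f a + staircase f (f a) eps n t). split.
  - apply staircase_integrable; auto.
  - intros t Ht.
    assert (Hft : f a <= f t) by (apply Hf; lra).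
    assert (Hfb : f t <= f b) by (apply Hf; lra).
    destruct (staircase_spec f (f a) eps t (cond_pos eps) Hft n) as [k [_ [Hk2 [Hk3 Hk4]]]].
    rewrite Hk2, Rabs_pos_eq by lra.
    destruct Hk4 as [Hk4 | Hk4]; [subst k; unfold D in HnD; generalize (cond_pos eps) |]; lra.
Qed.

Lemma ex_RInt_nondecreasing (f : R -> R) (a b : R) :
  (forall u v, Rmin a b <= u -> u <= v -> v <= Rmax a b -> f u <= f v) ->
  ex_RInt f a b.
Proof.
  intros Hf. destruct (Rle_dec a b) as [Hab | Hab].
  - rewrite Rmin_left, Rmax_right in Hf by lra.
    apply ex_RInt_Reals_1, Riemann_integrable_nondecreasing; auto.
  - rewrite Rmin_right, Rmax_left in Hf by lra.
    apply ex_RInt_swap, ex_RInt_Reals_1, Riemann_integrable_nondecreasing; auto; lra.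
Qed.

Lemma RInt_Chasles_R (f : R -> R) (a b c : R) : ex_RInt f a b -> ex_RInt f b c ->
  RInt f a b + RInt f b c = RInt f a c.
Proof. intros H1 H2. exact (RInt_Chasles f a b c H1 H2). Qed.

Lemma RInt_const_R (a b c : R) : RInt (fun _ => c) a b = (b - a) * c.
Proof. exact (RInt_const a b c). Qed.

Lemma RInt_swap_R (f : R -> R) (a b : R) : ex_RInt f a b -> RInt f b a = - RInt f a b.
Proof. intro H. exact (eq_sym (opp_RInt_swap f a b H)). Qed.

Lemma RInt_scal_R (f : R -> R) (a b c : R) : ex_RInt f a b ->
  RInt (fun z => c * f z) a b = c * RInt f a b.
Proof. intro H. exact (RInt_scal f a b c H). Qed.

Lemma RInt_bounds (f : R -> R) (a b lo hi : R) : a <= b -> ex_RInt f a b ->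
  (forall t, a < t < b -> lo <= f t <= hi) ->
  (b - a) * lo <= RInt f a b <= (b - a) * hi.
Proof.
  intros Hab Hf H. rewrite <- !RInt_const_R.
  split; apply RInt_le; auto; try apply ex_RInt_const; intros t Ht; apply H; auto.
Qed.

Lemma uniform_grid (a b d : R) : a <= b -> 0 < d ->
  exists (m : nat) (h : R), 0 <= h < d /\ a + INR m * h = b.
Proof.
  intros Hab Hd.
  destruct (INR_unbounded (Rmax ((b - a) / d) 0)) as [n Hn].
  assert (HmR : 0 < INR (S n)) by (apply lt_0_INR; lia).
  assert (Hm : (b - a) / d < INR (S n)) by (rewrite S_INR; generalize (Rmax_l ((b - a) / d) 0); lra).
  exists (S n), ((b - a) / INR (S n)). split; [split |].
  - apply Rdiv_le_0_compat; lra.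
  - apply Rmult_lt_reg_r with (INR (S n)); auto.
    replace ((b - a) / INR (S n) * INR (S n)) with (b - a) by (field; lra).
    apply Rmult_lt_compat_r with (r := d) in Hm; auto.
    replace ((b - a) / d * d) with (b - a) in Hm by (field; lra). lra.
  - field. lra.
Qed.

Lemma sumR_Sl f a n : sumR f a (S n) = f a + sumR f (S a) n.
Proof. reflexivity. Qed.

Lemma sumR_S f a n : sumR f a (S n) = sumR f a n + f (a + n)%nat.
Proof.
  revert a. induction n as [| n IH]; intros a.
  - unfold sumR; simpl. rewrite Nat.add_0_r. ring.
  - rewrite sumR_Sl, IH, sumR_Sl. replace (S a + n)%nat with (a + S n)%nat by lia. ring.
Qed.

Lemma sumR_ext f g a n : (forall i, (a <= i < a + n)%nat -> f i = g i) ->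
  sumR f a n = sumR g a n.
Proof.
  revert a. induction n as [| n IH]; intros a H; [reflexivity |].
  rewrite !sumR_Sl, (H a) by lia. rewrite (IH (S a)); [reflexivity |].
  intros i Hi. apply H. lia.
Qed.

Lemma sumR_plus f g a n : sumR (fun i => f i + g i) a n = sumR f a n + sumR g a n.
Proof. revert a; induction n; intros a; [unfold sumR; simpl; ring | rewrite !sumR_Sl, IHn; ring]. Qed.

Lemma sumR_scal c f a n : sumR (fun i => c * f i) a n = c * sumR f a n.
Proof. revert a; induction n; intros a; [unfold sumR; simpl; ring | rewrite !sumR_Sl, IHn; ring]. Qed.

Lemma sumR_shift f a n : sumR f (S a) n = sumR (fun i => f (S i)) a n.
Proof. revert a; induction n; intros a; [reflexivity | rewrite !sumR_Sl, IHn; reflexivity]. Qed.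

(** * Riemann-Stieltjes integrals by change of variables *)

Lemma Lub_Rbar_bounded (E : R -> Prop) (y0 M : R) : E y0 -> (forall y, E y -> y <= M) ->
  (forall y, E y -> y <= real (Lub_Rbar E)) /\
  (forall B, (forall y, E y -> y <= B) -> real (Lub_Rbar E) <= B).
Proof.
  intros H0 HM. destruct (Lub_Rbar_correct E) as [Hub Hl].
  assert (H1 : Rbar_le (Lub_Rbar E) M) by (apply Hl; intros y Hy; apply HM, Hy).
  assert (H2 : Rbar_le y0 (Lub_Rbar E)) by (apply Hub, H0).
  destruct (Lub_Rbar E) as [l | |]; simpl in H1, H2; try contradiction.
  split.
  - intros y Hy. exact (Hub y Hy).
  - intros B HB. exact (Hl B HB).
Qed.

(* [g o phi^-1] for nondecreasing [g] and [phi] on [0, +oo), written as a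
   supremum so that no inverse of [phi] is needed; [z = 0] keeps the set
   non-empty when [s <= phi 0]. *)
Definition comp_phi_inv (g phi : R -> R) (s : R) : R :=
  real (Lub_Rbar (fun y => exists z, 0 <= z /\ (z = 0 \/ phi z < s) /\ y = g z)).

Section CompPhiInv.

Variables (g phi : R -> R) (M : R).
Hypothesis g_le_M : forall z, 0 <= z -> g z <= M.

Lemma comp_phi_inv_ge (s z : R) : 0 <= z -> (z = 0 \/ phi z < s) ->
  g z <= comp_phi_inv g phi s.
Proof.
  intros Hz Hs. unfold comp_phi_inv.
  apply (Lub_Rbar_bounded _ (g z) M).
  - exists z; auto.
  - intros y [z' [Hz' [_ ->]]]. apply g_le_M, Hz'.
  - exists z; auto.
Qed.

Lemma comp_phi_inv_le (s B : R) :
  (forall z, 0 <= z -> (z = 0 \/ phi z < s) -> g z <= B) -> comp_phi_inv g phi s <= B.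
Proof.
  intros HB. unfold comp_phi_inv.
  apply (Lub_Rbar_bounded _ (g 0) M).
  - exists 0. split; [lra | split; [now left | reflexivity]].
  - intros y [z' [Hz' [_ ->]]]. apply g_le_M, Hz'.
  - intros y [z [Hz [Hs ->]]]. apply HB; auto.
Qed.

Lemma comp_phi_inv_nondecr (s s' : R) : s <= s' -> comp_phi_inv g phi s <= comp_phi_inv g phi s'.
Proof.
  intros Hss. apply comp_phi_inv_le.
  intros z Hz Hs. apply comp_phi_inv_ge; auto. destruct Hs; [left | right]; lra.
Qed.

Lemma ex_RInt_comp_phi_inv (a b : R) : ex_RInt (comp_phi_inv g phi) a b.
Proof. apply ex_RInt_nondecreasing. intros; apply comp_phi_inv_nondecr; lra. Qed.

End CompPhiInv.

Lemma comp_phi_inv_le_fun (g h phi : R -> R) (M s : R) :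
  (forall z, 0 <= z -> g z <= M) -> (forall z, 0 <= z -> h z <= M) ->
  (forall z, 0 <= z -> g z <= h z) ->
  comp_phi_inv g phi s <= comp_phi_inv h phi s.
Proof.
  intros Hg Hh Hgh. apply (comp_phi_inv_le g phi M Hg).
  intros z Hz Hs. apply Rle_trans with (h z); [auto |].
  apply (comp_phi_inv_ge h phi M Hh); auto.
Qed.

Definition continuous_on_nonneg (phi : R -> R) : Prop :=
  forall v, 0 <= v ->
    filterlim phi (within (fun y => 0 <= y) (locally v)) (locally (phi v)).

Lemma continuity_pt_clamp (phi : R -> R) (v : R) : continuous_on_nonneg phi -> 0 <= v ->
  continuity_pt (fun t => phi (Rmax 0 t)) v.
Proof.
  intros Hc Hv. apply continuity_pt_filterlim.
  rewrite Rmax_right by lra.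
  apply filterlim_locally. intro eps.
  specialize (Hc v Hv). apply filterlim_locally with (eps := eps) in Hc.
  destruct Hc as [d Hd]. exists d. intros y Hy.
  apply Hd; [| apply Rmax_l].
  unfold ball in *; simpl in *. unfold AbsRing_ball, abs, minus, plus, opp in *; simpl in *.
  unfold Rmax. destruct (Rle_dec 0 y); auto.
  apply Rle_lt_trans with (Rabs (y + - v)); auto.
  rewrite !Rabs_left1 by lra. lra.
Qed.

Lemma unif_cont_on_nonneg (phi : R -> R) (a b : R) : continuous_on_nonneg phi -> 0 <= a ->
  forall eta, 0 < eta -> exists delta, 0 < delta /\
    forall u v, a <= u <= b -> a <= v <= b -> Rabs (u - v) < delta ->
      Rabs (phi u - phi v) < eta.
Proof.
  intros Hc Ha eta Heta.
  assert (H : forall u, a <= u <= b -> continuity_pt (fun t => phi (Rmax 0 t)) u).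
  { intros u Hu. apply continuity_pt_clamp; auto. lra. }
  destruct (Heine_cor2 H (mkposreal _ Heta)) as [d Hd].
  exists d. split; [apply cond_pos |]. intros u v Hu Hv Huv.
  specialize (Hd u v Hu Hv Huv). simpl in Hd.
  rewrite !Rmax_right in Hd by lra. exact Hd.
Qed.

Lemma tagged_partition_nondecr a b m p xi : tagged_partition a b m p xi ->
  forall i j, (i <= j <= m)%nat -> p i <= p j.
Proof.
  intros [_ [_ H]] i j Hij. induction j as [| j IH].
  - replace i with 0%nat by lia. lra.
  - destruct (Nat.eq_dec i (S j)) as [-> | Hne]; [lra |].
    apply Rle_trans with (p j); [apply IH; lia |]. specialize (H j ltac:(lia)). lra.
Qed.

(* Two limits are both approximated by the Riemann-Stieltjes sum of one
   uniform partition fine enough for both. *)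
Lemma is_RS_integral_unique g phi a b I J : a <= b ->
  is_RS_integral g phi a b I -> is_RS_integral g phi a b J -> I = J.
Proof.
  intros Hab HI HJ.
  apply Rminus_diag_uniq, Rabs_eq_0, Rle_antisym; [| apply Rabs_pos].
  apply Rnot_lt_le. intro Hpos.
  set (e := Rabs (I - J) / 2).
  assert (He : 0 < e) by (unfold e; lra).
  destruct (HI e He) as [d1 [Hd1 H1]]. destruct (HJ e He) as [d2 [Hd2 H2]].
  set (d := Rmin d1 d2).
  assert (Hd : 0 < d) by (unfold d; apply Rmin_glb_lt; auto).
  destruct (uniform_grid a b d Hab Hd) as [m [h [[Hh Hhd] Hmh]]].
  set (p := fun i : nat => a + INR i * h).
  assert (Hp : tagged_partition a b m p p).
  { split; [| split].
    - unfold p. simpl. ring.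
    - exact Hmh.
    - intros i Hi. unfold p. rewrite S_INR. split; nra. }
  assert (Hmesh : forall d', h < d' -> mesh_lt m p d').
  { intros d' Hd' i Hi. unfold p. rewrite S_INR. lra. }
  specialize (H1 m p p Hp (Hmesh d1 (Rlt_le_trans _ _ _ Hhd (Rmin_l _ _)))).
  specialize (H2 m p p Hp (Hmesh d2 (Rlt_le_trans _ _ _ Hhd (Rmin_r _ _)))).
  assert (Rabs (I - J) <= Rabs (RS_sum g phi m p p - J) + Rabs (RS_sum g phi m p p - I)).
  { replace (I - J) with ((RS_sum g phi m p p - J) - (RS_sum g phi m p p - I)) by ring.
    eapply Rle_trans; [apply Rabs_triang |]. rewrite Rabs_Ropp. lra. }
  unfold e in *. lra.
Qed.

Lemma RS_int_ord_eq g phi a b I : a <= b -> is_RS_integral g phi a b I ->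
  RS_int_ord g phi a b = I.
Proof.
  intros Hab HI. unfold RS_int_ord.
  destruct (excluded_middle_informative _) as [H | H].
  - destruct (constructive_indefinite_description _ H) as [J HJ]. simpl.
    eapply is_RS_integral_unique; eauto.
  - exfalso. apply H. exists I; auto.
Qed.

Section ChangeOfVariables.

Variables (phi g : R -> R) (M : R).
Hypothesis phi_nondecr : forall v w, 0 <= v -> v <= w -> phi v <= phi w.
Hypothesis phi_cont : continuous_on_nonneg phi.
Hypothesis g_nondecr : forall v w, 0 <= v -> v <= w -> g v <= g w.
Hypothesis g_le_M : forall z, 0 <= z -> g z <= M.

Lemma RInt_comp_phi_inv_bounds (u w : R) : 0 <= u -> u <= w ->
  (phi w - phi u) * g u <= RInt (comp_phi_inv g phi) (phi u) (phi w) <= (phi w - phi u) * g w.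
Proof.
  intros Hu Huw. apply RInt_bounds.
  - apply phi_nondecr; lra.
  - apply (ex_RInt_comp_phi_inv g phi M g_le_M).
  - intros s Hs. split.
    + apply (comp_phi_inv_ge g phi M g_le_M); auto. lra.
    + apply (comp_phi_inv_le g phi M g_le_M). intros z Hz [-> | Hzs].
      * apply g_nondecr; lra.
      * apply g_nondecr; auto. destruct (Rle_dec z w); auto.
        assert (phi w <= phi z) by (apply phi_nondecr; lra). lra.
Qed.

(* On a piece [p i, p (S i)] the sum term and the integral both lie between
   [g (p i)] and [g (p (S i))] times the increment of [phi]; the errors
   telescope in [g]. *)
Lemma RS_sum_close a b m p xi eta : 0 <= a -> tagged_partition a b m p xi ->
  (forall i, (i < m)%nat -> phi (p (S i)) - phi (p i) <= eta) ->
  forall k, (k <= m)%nat ->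
  Rabs (sumR (fun i => g (xi i) * (phi (p (S i)) - phi (p i))) 0 k
        - RInt (comp_phi_inv g phi) (phi (p 0%nat)) (phi (p k)))
   <= eta * (g (p k) - g (p 0%nat)).
Proof.
  intros Ha Hp Heta.
  pose proof (tagged_partition_nondecr _ _ _ _ _ Hp) as Hmono.
  destruct Hp as [Hp0 [_ Hpx]].
  induction k as [| k IH]; intros Hk.
  - unfold sumR; simpl. rewrite RInt_point. unfold zero; simpl.
    rewrite Rminus_0_r, Rabs_R0. lra.
  - rewrite sumR_S. simpl (0 + k)%nat.
    rewrite <- (RInt_Chasles_R _ (phi (p 0%nat)) (phi (p k)) (phi (p (S k))))
      by apply (ex_RInt_comp_phi_inv g phi M g_le_M).
    assert (Hpk : a <= p k) by (rewrite <- Hp0; apply Hmono; lia).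
    assert (Hpk1 : p k <= p (S k)) by (apply Hmono; lia).
    specialize (Hpx k ltac:(lia)). specialize (IH ltac:(lia)). specialize (Heta k ltac:(lia)).
    destruct (RInt_comp_phi_inv_bounds (p k) (p (S k)) ltac:(lra) Hpk1) as [Hlo Hhi].
    assert (g (p k) <= g (xi k) <= g (p (S k))) by (split; apply g_nondecr; lra).
    assert (phi (p k) <= phi (p (S k))) by (apply phi_nondecr; lra).
    set (Dphi := phi (p (S k)) - phi (p k)) in *.
    set (Ik := RInt (comp_phi_inv g phi) (phi (p k)) (phi (p (S k)))) in *.
    assert (0 <= Dphi) by (unfold Dphi; lra).
    assert (Hpiece : Rabs (g (xi k) * Dphi - Ik) <= (g (p (S k)) - g (p k)) * eta).
    { assert (Rabs (g (xi k) * Dphi - Ik) <= (g (p (S k)) - g (p k)) * Dphi)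
        by (apply Rabs_le; split; nra).
      assert (0 <= g (p (S k)) - g (p k)) by lra.
      assert ((g (p (S k)) - g (p k)) * Dphi <= (g (p (S k)) - g (p k)) * eta)
        by (apply Rmult_le_compat_l; lra).
      lra. }
    match goal with |- Rabs ?e <= _ => replace e with
      ((sumR (fun i => g (xi i) * (phi (p (S i)) - phi (p i))) 0 k
        - RInt (comp_phi_inv g phi) (phi (p 0%nat)) (phi (p k)))
       + (g (xi k) * Dphi - Ik)) by (unfold Dphi, Ik; ring) end.
    eapply Rle_trans; [apply Rabs_triang | lra].
Qed.

Lemma is_RS_integral_comp_phi_inv a b : 0 <= a <= b ->
  is_RS_integral g phi a b (RInt (comp_phi_inv g phi) (phi a) (phi b)).
Proof.
  intros Hab eps Heps.
  assert (Hgab : g a <= g b) by (apply g_nondecr; lra).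
  set (eta := eps / (g b - g a + 1)).
  assert (Heta : 0 < eta) by (unfold eta; apply Rdiv_lt_0_compat; lra).
  destruct (unif_cont_on_nonneg phi a b phi_cont (proj1 Hab) eta Heta) as [d [Hd Huc]].
  exists d. split; auto. intros m p xi Hp Hmesh.
  pose proof (tagged_partition_nondecr _ _ _ _ _ Hp) as Hmono.
  pose proof Hp as [Hp0 [Hpm _]].
  assert (Hin : forall i, (i <= m)%nat -> a <= p i <= b).
  { intros i Hi. rewrite <- Hp0, <- Hpm. split; apply Hmono; lia. }
  assert (Hstep : forall i, (i < m)%nat -> phi (p (S i)) - phi (p i) <= eta).
  { intros i Hi.
    assert (p i <= p (S i)) by (apply Hmono; lia).
    specialize (Hmesh i Hi).
    assert (Hh := Huc (p (S i)) (p i) (Hin (S i) ltac:(lia)) (Hin i ltac:(lia))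
                      ltac:(rewrite Rabs_pos_eq; lra)).
    apply Rabs_lt_between in Hh. lra. }
  assert (H := RS_sum_close a b m p xi eta (proj1 Hab) Hp Hstep m (Nat.le_refl m)).
  rewrite Hp0, Hpm in H. unfold RS_sum.
  eapply Rle_lt_trans; [apply H |].
  assert (eta * (g b - g a) * (g b - g a + 1) = eps * (g b - g a))
    by (unfold eta; field; lra).
  apply Rmult_lt_reg_r with (g b - g a + 1); nra.
Qed.

Lemma RS_int_comp_phi_inv a b : 0 <= a -> 0 <= b ->
  RS_int g phi a b = RInt (comp_phi_inv g phi) (phi a) (phi b).
Proof.
  intros Ha Hb. unfold RS_int. destruct (Rle_dec a b) as [Hab | Hab].
  - apply RS_int_ord_eq; auto. apply is_RS_integral_comp_phi_inv; auto.
  - rewrite (RS_int_ord_eq g phi b a (RInt (comp_phi_inv g phi) (phi b) (phi a)));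
      [| lra | apply is_RS_integral_comp_phi_inv; lra].
    rewrite RInt_swap_R by apply (ex_RInt_comp_phi_inv g phi M g_le_M). ring.
Qed.

End ChangeOfVariables.

(* Chaining the local bound along a fine grid gives
   [K w - K u >= - eta * (X w - X u)] for every [eta > 0]. *)
Lemma le_of_local_bound (K X : R -> R) (u w : R) : u <= w ->
  (forall a b, u <= a -> a <= b -> b <= w -> X a <= X b) ->
  (forall eta, 0 < eta -> exists delta, 0 < delta /\
     forall a b, u <= a -> a <= b -> b <= w -> b - a < delta ->
       K b - K a >= - eta * (X b - X a)) ->
  K u <= K w.
Proof.
  intros Huw HX HK.
  assert (HXuw : X u <= X w) by (apply HX; lra).
  assert (Hchain : forall eta, 0 < eta -> K w - K u >= - eta * (X w - X u)).
  { intros eta Heta. destruct (HK eta Heta) as [d [Hd Hloc]].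
    destruct (uniform_grid u w d Huw Hd) as [m [h [[Hh Hhd] Hmh]]].
    assert (Hpt : forall i, (i <= m)%nat -> u <= u + INR i * h <= w).
    { intros i Hi. apply le_INR in Hi. generalize (pos_INR i). nra. }
    assert (Hind : forall i, (i <= m)%nat ->
              K (u + INR i * h) - K u >= - eta * (X (u + INR i * h) - X u)).
    { induction i as [| i IH]; intros Hi.
      - simpl. rewrite Rmult_0_l, Rplus_0_r. lra.
      - specialize (IH ltac:(lia)).
        assert (H1 := Hpt i ltac:(lia)). assert (H2 := Hpt (S i) Hi). rewrite S_INR in *.
        assert (Hl := Hloc (u + INR i * h) (u + (INR i + 1) * h)
                        ltac:(lra) ltac:(nra) ltac:(lra) ltac:(nra)).
        lra. }
    specialize (Hind m (Nat.le_refl m)). rewrite Hmh in Hind. exact Hind. }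
  apply Rnot_lt_le. intro Hlt.
  set (eta := (K u - K w) / (2 * (X w - X u + 1))).
  assert (Heta : 0 < eta) by (unfold eta; apply Rdiv_lt_0_compat; lra).
  specialize (Hchain eta Heta).
  assert (eta * (X w - X u + 1) * 2 = K u - K w) by (unfold eta; field; lra).
  nra.
Qed.

(** * Revenue of a block, entry by entry *)

Fixpoint count_true (rho : nat -> bool) (k : nat) : nat :=
  match k with
  | O => O
  | S k' => (count_true rho k' + if rho k' then 1 else 0)%nat
  end.

Lemma sumR_indicator (rho : nat -> bool) n :
  sumR (fun k => if rho k then 1 else 0) 0 n = INR (count_true rho n).
Proof.
  induction n as [| n IH]; [reflexivity |].
  rewrite sumR_S, IH. simpl. rewrite plus_INR. destruct (rho n); simpl; ring.
Qed.

(* The contribution of a bid [v] at position [j], real iff [b], below [c] real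
   bids: its own payment net of its area [Uf j v] (if real), its burn, and the
   area [Uf (pred j) v - Uf j v] it subtracts from each of the [c] real
   payments above it. *)
Definition entry_term (X Uf Bf : nat -> R -> R) (j : nat) (b : bool) (c : nat) (v : R) : R :=
  (if b then v * X j v - Uf j v else 0) - Bf j v + INR c * (Uf (pred j) v - Uf j v).

(* Summation by parts: each payment is a sum of area differences over the
   positions below it; regrouping them by position gives one term per entry. *)
Lemma revenue_by_entries (X Uf Bf : nat -> R -> R) (V : nat -> R) (rho : nat -> bool) n :
  sumR (fun k => if rho k
                 then V k * X (S k) (V k)
                      - sumR (fun j => Uf (S j) (V j) - Uf (S j) (V (S j))) k (n - k)
                 else 0) 0 n
  - sumR (fun k => Bf (S k) (V k)) 0 n
  = sumR (fun k => entry_term X Uf Bf (S k) (rho k) (count_true rho k) (V k)) 0 n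
    + INR (count_true rho n) * Uf n (V n).
Proof.
  set (W := fun j => Uf (S j) (V j) - Uf (S j) (V (S j))).
  induction n as [| n IH]; [unfold sumR; simpl; ring |].
  rewrite !sumR_S. simpl (0 + n)%nat.
  rewrite (sumR_ext (fun k => if rho k then V k * X (S k) (V k) - sumR W k (S n - k) else 0)
             (fun k => (if rho k then V k * X (S k) (V k) - sumR W k (n - k) else 0)
                       + (- W n) * (if rho k then 1 else 0))).
  2:{ intros i Hi. replace (S n - i)%nat with (S (n - i)) by lia. rewrite sumR_S.
      replace (i + (n - i))%nat with n by lia. destruct (rho i); ring. }
  rewrite sumR_plus, sumR_scal, sumR_indicator.
  replace (S n - n)%nat with 1%nat by lia.
  unfold sumR at 3. simpl seq. simpl map. simpl fold_right.
  unfold W in *. unfold entry_term at 2. simpl pred. simpl count_true. rewrite plus_INR.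
  destruct (rho n); simpl INR; lra.
Qed.

(* A block placed from position [j] on, below [c] real bids. *)
Fixpoint block_sum (E : nat -> bool -> nat -> R -> R) (j c : nat) (l : list (R * bool)) : R :=
  match l with
  | nil => 0
  | (v, b) :: t => E j b c v + block_sum E (S j) (if b then S c else c) t
  end.

Fixpoint count_real (l : list (R * bool)) : nat :=
  match l with
  | nil => O
  | (_, b) :: t => ((if b then 1 else 0) + count_real t)%nat
  end.

Notation as_real l := (map (fun v : R => (v, true)) l).

Lemma count_real_le l : (count_real l <= length l)%nat.
Proof. induction l as [| [v b] l IH]; simpl; [lia | destruct b; lia]. Qed.

Lemma block_sum_app E j c A B :
  block_sum E j c (A ++ B) = block_sum E j c A + block_sum E (j + length A) (c + count_real A) B.
Proof.
  revert j c; induction A as [| [v b] A IH]; intros j c; simpl.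
  - rewrite !Nat.add_0_r. ring.
  - rewrite IH. replace (S j + length A)%nat with (j + S (length A))%nat by lia.
    destruct b; simpl.
    + rewrite <- (plus_n_Sm c). ring.
    + ring.
Qed.

Definition flag_at (blk : list (R * bool)) (k : nat) : bool := snd (nth k blk (0, false)).
Definition bid_at (blk : list (R * bool)) (k : nat) : R := fst (nth k blk (0, false)).

Lemma count_true_flag_at_cons (v : R) (b : bool) t k :
  count_true (flag_at ((v, b) :: t)) (S k) = ((if b then 1 else 0) + count_true (flag_at t) k)%nat.
Proof.
  induction k as [| k IH].
  - unfold flag_at; simpl. destruct b; reflexivity.
  - change (count_true (flag_at ((v, b) :: t)) (S (S k)))
      with (count_true (flag_at ((v, b) :: t)) (S k) + (if flag_at t k then 1 else 0))%nat.
    rewrite IH.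
    change (count_true (flag_at t) (S k))
      with (count_true (flag_at t) k + (if flag_at t k then 1 else 0))%nat.
    lia.
Qed.

Lemma block_sum_as_sumR E blk j c :
  block_sum E j c blk
  = sumR (fun k => E (j + k)%nat (flag_at blk k) (c + count_true (flag_at blk) k)%nat
                     (bid_at blk k)) 0 (length blk).
Proof.
  revert j c. induction blk as [| [v b] t IH]; intros j c; [reflexivity |].
  cbn [block_sum length]. rewrite sumR_Sl, sumR_shift, IH.
  f_equal.
  - unfold flag_at, bid_at. simpl. rewrite !Nat.add_0_r. reflexivity.
  - apply sumR_ext. intros k _. rewrite count_true_flag_at_cons.
    replace (S j + k)%nat with (j + S k)%nat by lia.
    change (flag_at ((v, b) :: t) (S k)) with (flag_at t k).
    change (bid_at ((v, b) :: t) (S k)) with (bid_at t k).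
    f_equal. destruct b; lia.
Qed.

Lemma nth_map_fst (blk : list (R * bool)) k d : (k < length blk)%nat ->
  nth k (map fst blk) d = bid_at blk k.
Proof.
  revert k; induction blk as [| [v b] t IH]; intros k Hk; simpl in Hk; [lia |].
  destruct k; [reflexivity |]. apply IH. lia.
Qed.

Lemma StronglySorted_remove (A B : list R) (y : R) : StronglySorted Rge (A ++ y :: B) ->
  StronglySorted Rge (A ++ B) /\ (forall v, In v B -> v <= y).
Proof.
  induction A as [| a A IH]; simpl; intros H; inversion H; subst.
  - split; auto. intros v Hv. rewrite Forall_forall in *. apply Rge_le; auto.
  - destruct (IH H2) as [H4 H5]. split; auto.
    constructor; auto. rewrite Forall_forall in *. intros v Hv. apply H3.
    apply in_app_or in Hv. apply in_or_app. destruct Hv; [left | right; right]; auto.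
Qed.

Lemma StronglySorted_filter_real (l : list (R * bool)) :
  StronglySorted Rge (map fst l) -> StronglySorted Rge (map fst (filter snd l)).
Proof.
  induction l as [| [v b] t IH]; simpl; intros H; [constructor |].
  inversion H; subst. destruct b; simpl; auto.
  constructor; auto. rewrite Forall_forall in *. intros w Hw. apply H3.
  rewrite in_map_iff in *. destruct Hw as [e [He1 He2]]. exists e. split; auto.
  apply filter_In in He2. tauto.
Qed.

Lemma all_real_as_real (l : list (R * bool)) : (forall e, In e l -> snd e = true) ->
  l = as_real (map fst l).
Proof.
  induction l as [| [v b] t IH]; intros H; simpl; [reflexivity |].
  replace b with true by (symmetry; apply (H (v, b)); left; auto).
  rewrite <- IH; auto. intros; apply H; right; auto.
Qed.

Lemma split_last_fake (l : list (R * bool)) : (exists e, In e l /\ snd e = false) ->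
  exists A y Rs, l = A ++ (y, false) :: as_real Rs.
Proof.
  induction l as [| [v b] t IH]; intros [e [He Hf]]; [destruct He |].
  destruct (classic (exists e, In e t /\ snd e = false)) as [Ht | Ht].
  - destruct (IH Ht) as [A [y [Rs ->]]]. exists ((v, b) :: A), y, Rs. reflexivity.
  - assert (Hall : t = as_real (map fst t)).
    { apply all_real_as_real. intros [w c] Hw. destruct c; [reflexivity |].
      exfalso. apply Ht. exists (w, false). auto. }
    destruct He as [He | He].
    + subst e. simpl in Hf. subst b. exists nil, v, (map fst t). simpl. rewrite <- Hall. reflexivity.
    + exfalso. apply Ht. exists e; auto.
Qed.

(** * Order statistics *)

Definition count_ge (t : R) (l : list R) : nat :=
  length (filter (fun z => if Rle_dec t z then true else false) l).

Lemma count_ge_perm t l l' : Permutation l l' -> count_ge t l = count_ge t l'.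
Proof.
  intro H. induction H; unfold count_ge in *; simpl.
  - reflexivity.
  - destruct (Rle_dec t _); simpl; lia.
  - repeat (destruct (Rle_dec t _); simpl); lia.
  - lia.
Qed.

Lemma count_ge_app t l1 l2 : count_ge t (l1 ++ l2) = (count_ge t l1 + count_ge t l2)%nat.
Proof. unfold count_ge. rewrite filter_app, length_app. reflexivity. Qed.

Lemma count_ge_nil t l : (forall v, In v l -> v < t) -> count_ge t l = 0%nat.
Proof.
  induction l as [| a l IH]; intros H; [reflexivity |]. unfold count_ge in *; simpl.
  destruct (Rle_dec t a); [specialize (H a (or_introl eq_refl)); lra |].
  apply IH. intros; apply H; right; auto.
Qed.

Lemma count_ge_nth_sorted l : StronglySorted Rge l ->
  forall i, (i < length l)%nat -> (S i <= count_ge (nth i l 0%R) l)%nat.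
Proof.
  induction l as [| s l IH]; intros HS i Hi; simpl in Hi; [lia |].
  inversion HS; subst. unfold count_ge; simpl.
  destruct i as [| i]; simpl.
  - destruct (Rle_dec s s); [simpl; lia | lra].
  - assert (Hin : In (nth i l 0) l) by (apply nth_In; lia).
    rewrite Forall_forall in H2. specialize (H2 _ Hin).
    destruct (Rle_dec (nth i l 0) s); [| lra]. simpl.
    specialize (IH H1 i ltac:(lia)). unfold count_ge in IH. lia.
Qed.

Lemma count_ge_sorted_le l : StronglySorted Rge l ->
  forall i t, (i < length l)%nat -> nth i l 0 < t -> (count_ge t l <= i)%nat.
Proof.
  induction l as [| w l IH]; intros Hl i t Hi Ht; simpl in Hi; [lia |].
  inversion Hl; subst. rewrite Forall_forall in H2.
  destruct i as [| i]; simpl in Ht.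
  - rewrite count_ge_nil; [lia |]. intros v [<- | Hv]; auto. specialize (H2 v Hv). lra.
  - unfold count_ge; simpl. specialize (IH H1 i t ltac:(lia) Ht). unfold count_ge in IH.
    destruct (Rle_dec t w); simpl; lia.
Qed.

(* If the i-th largest element of a sub-multiset exceeded the i-th largest of
   the whole, the whole would contain fewer than i+1 elements above it. *)
Lemma sorted_submultiset_dominated Sl W rest :
  StronglySorted Rge Sl -> StronglySorted Rge W -> Permutation W (Sl ++ rest) ->
  (length Sl <= length W)%nat /\ (forall i, (i < length Sl)%nat -> nth i Sl 0 <= nth i W 0).
Proof.
  intros HS HW HP.
  assert (Hl : length W = (length Sl + length rest)%nat)
    by (rewrite (Permutation_length HP), length_app; reflexivity).
  split; [lia |]. intros i Hi.
  apply Rnot_lt_le. intro Hlt.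
  assert (H1 := count_ge_nth_sorted Sl HS i Hi).
  assert (H2 := count_ge_sorted_le W HW i (nth i Sl 0) ltac:(lia) Hlt).
  rewrite (count_ge_perm _ _ _ HP), count_ge_app in H2. lia.
Qed.

(** * Censoring and fabricating do not pay *)

(* One step of the induction in [block_revenue_shift_real]: [Dn] and [Dm] are
   the area gaps of the moved bid at positions [n] and [n - 1]. *)
Lemma shift_step_bound (n c Dn Dm Q : R) : 2 <= n -> 0 <= c <= n - 1 -> 0 <= Dn ->
  n * Dn <= (n - 1) * Dm -> (n - 1) * Dm <= Q ->
  (c + 1) * Dn - c * Dm + (n - 1 - c) * Q / n <= (n - 1 - c) * Q / (n - 1).
Proof.
  intros Hn Hc HDn Hnm HmQ.
  assert (Hgap : (n - 1) * ((c + 1) * Dn - c * Dm) <= (n - 1 - c) * Dn).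
  { assert (c * (n * Dn) <= c * ((n - 1) * Dm)) by (apply Rmult_le_compat_l; lra). nra. }
  assert (HQ : (n - 1 - c) * (n * Dn) <= (n - 1 - c) * Q)
    by (apply Rmult_le_compat_l; lra).
  assert (Hstep : (c + 1) * Dn - c * Dm <= (n - 1 - c) * Q / (n * (n - 1))).
  { apply Rmult_le_reg_r with (n * (n - 1)); [nra |].
    replace ((n - 1 - c) * Q / (n * (n - 1)) * (n * (n - 1))) with ((n - 1 - c) * Q)
      by (field; lra).
    nra. }
  replace ((n - 1 - c) * Q / (n - 1))
    with ((n - 1 - c) * Q / (n * (n - 1)) + (n - 1 - c) * Q / n) by (field; lra).
  lra.
Qed.

Section MinerRevenue.

Variables (phi : R -> R) (x : nat -> R -> R) (r : R).
Hypothesis r_ge0 : 0 <= r.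
Hypothesis phi_nondecr : forall v w, 0 <= v -> v <= w -> phi v <= phi w.
Hypothesis phi_cont : continuous_on_nonneg phi.
Hypothesis phi_le_id : forall v, 0 <= v -> phi v <= v.
Hypothesis phi_lt0_below : forall v, 0 <= v -> v < r -> phi v < 0.
Hypothesis phi_ge0_above : forall v, r <= v -> 0 <= phi v.
Hypothesis r_is_phi_inv : phi_inv phi 0 = r.
Hypothesis x_GPA : is_GPA phi x.
Hypothesis x_gap_decr : forall t w, (1 <= t)%nat -> 0 <= w ->
  INR t * (x t w - x (S t) w) >= INR (S t) * (x (S t) w - x (S (S t)) w).
Hypothesis x_gap_area_le_burn : forall t w, (1 <= t)%nat -> r <= w ->
  INR t * RInt (fun z => x t z - x (S t) z) r w <= phi w * x (S t) w - RS_int (x (S t)) phi r w.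

Lemma x_between_0_1 t v : (1 <= t)%nat -> 0 <= v -> 0 <= x t v <= 1.
Proof. intros Ht. apply (x_GPA t Ht). Qed.

Lemma x_nondecr t v w : (1 <= t)%nat -> 0 <= v -> v <= w -> x t v <= x t w.
Proof. intros Ht. apply (x_GPA t Ht). Qed.

Lemma x_succ_le t v : (1 <= t)%nat -> 0 <= v -> x (S t) v <= x t v.
Proof. intros Ht. apply (x_GPA t Ht). Qed.

Lemma x_below_r t v : (1 <= t)%nat -> 0 <= v -> v < r -> x t v = 0.
Proof. intros Ht Hv Hvr. apply (x_GPA t Ht); auto. Qed.

Lemma ex_RInt_x t a b : (1 <= t)%nat -> 0 <= a -> 0 <= b -> ex_RInt (x t) a b.
Proof.
  intros Ht Ha Hb. apply ex_RInt_nondecreasing. intros u v Hu Huv _.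
  apply x_nondecr; auto. apply Rle_trans with (Rmin a b); [apply Rmin_glb |]; auto.
Qed.

Lemma ex_RInt_x_gap t a b : (1 <= t)%nat -> 0 <= a -> 0 <= b ->
  ex_RInt (fun z => x t z - x (S t) z) a b.
Proof.
  intros Ht Ha Hb. apply (ex_RInt_minus (V := R_NormedModule)); apply ex_RInt_x; auto.
Qed.

Lemma ex_RInt_comp_phi_inv_x t a b : (1 <= t)%nat -> ex_RInt (comp_phi_inv (x t) phi) a b.
Proof. intros Ht. apply (ex_RInt_comp_phi_inv _ _ 1). intros; apply x_between_0_1; auto. Qed.

Lemma RS_int_x t a b : (1 <= t)%nat -> 0 <= a -> 0 <= b ->
  RS_int (x t) phi a b = RInt (comp_phi_inv (x t) phi) (phi a) (phi b).
Proof.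
  intros Ht. apply (RS_int_comp_phi_inv _ _ 1); auto.
  - intros; apply x_nondecr; auto.
  - intros; apply x_between_0_1; auto.
Qed.

Lemma RInt_comp_phi_inv_x_bounds t u w : (1 <= t)%nat -> 0 <= u -> u <= w ->
  (phi w - phi u) * x t u <= RInt (comp_phi_inv (x t) phi) (phi u) (phi w)
  <= (phi w - phi u) * x t w.
Proof.
  intros Ht. apply (RInt_comp_phi_inv_bounds _ _ 1); auto.
  - intros; apply x_nondecr; auto.
  - intros; apply x_between_0_1; auto.
Qed.

(* [last_margin t v]: payment minus burn of a real bid [v] at position [t] with no bid below it. *)
Definition area (t : nat) (v : R) : R := RInt (x t) r v.
Definition burn (t : nat) (v : R) : R := phi v * x t v - RS_int (x t) phi r v.
Definition area_gap (t : nat) (v : R) : R := area t v - area (S t) v.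
Definition last_margin (t : nat) (v : R) : R := v * x t v - area t v - burn t v.

Lemma area_below_r t v : (1 <= t)%nat -> 0 <= v <= r -> area t v = 0.
Proof.
  intros Ht Hv. unfold area. rewrite (RInt_ext _ (fun _ => 0)).
  - rewrite RInt_const_R. ring.
  - intros z Hz. rewrite Rmin_right, Rmax_left in Hz by lra. apply x_below_r; [exact Ht | lra | lra].
Qed.

Lemma area_gap_RInt t v : (1 <= t)%nat -> 0 <= v ->
  area_gap t v = RInt (fun z => x t z - x (S t) z) r v.
Proof.
  intros Ht Hv. unfold area_gap, area.
  symmetry. apply (RInt_minus (V := R_CompleteNormedModule)); apply ex_RInt_x; auto.
Qed.

Lemma area_gap_below_r t v : (1 <= t)%nat -> 0 <= v <= r -> area_gap t v = 0.
Proof. intros Ht Hv. unfold area_gap. rewrite !area_below_r by (auto; lia). ring. Qed.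

Lemma area_gap_nondecr t v w : (1 <= t)%nat -> 0 <= v -> v <= w ->
  area_gap t v <= area_gap t w.
Proof.
  intros Ht Hv Hvw.
  rewrite !area_gap_RInt by (auto; lra).
  rewrite <- (RInt_Chasles_R _ r v w) by (apply ex_RInt_x_gap; auto; lra).
  assert (0 <= RInt (fun z => x t z - x (S t) z) v w); [| lra].
  apply RInt_ge_0; [lra | apply ex_RInt_x_gap; auto; lra |].
  intros z Hz. assert (x (S t) z <= x t z) by (apply x_succ_le; auto; lra). lra.
Qed.

Lemma area_gap_ge0 t v : (1 <= t)%nat -> 0 <= v -> 0 <= area_gap t v.
Proof.
  intros Ht Hv. rewrite <- (area_gap_below_r t 0) by (auto; lra).
  apply area_gap_nondecr; auto; lra.
Qed.

Lemma area_gap_weighted_decr t v : (1 <= t)%nat -> 0 <= v ->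
  INR (S t) * area_gap (S t) v <= INR t * area_gap t v.
Proof.
  intros Ht Hv. destruct (Rle_dec v r) as [Hvr | Hvr].
  - rewrite !area_gap_below_r by (auto; lra). lra.
  - rewrite !area_gap_RInt by (auto; lia).
    rewrite <- !RInt_scal_R by (apply ex_RInt_x_gap; auto; lra).
    apply RInt_le; [lra | apply (ex_RInt_scal (V := R_NormedModule)), ex_RInt_x_gap; auto; lra.. |].
    intros z Hz. specialize (x_gap_decr t z Ht ltac:(lra)). lra.
Qed.

Lemma comp_phi_inv_x_below t s : (1 <= t)%nat -> 0 < r -> s <= phi r ->
  comp_phi_inv (x t) phi s = 0.
Proof.
  intros Ht Hr Hs.
  assert (Hbound : forall z, 0 <= z -> x t z <= 1) by (intros; apply x_between_0_1; auto).
  apply Rle_antisym.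
  - apply (comp_phi_inv_le _ _ 1 Hbound). intros z Hz [-> | Hzs].
    + rewrite x_below_r; auto; lra.
    + destruct (Rlt_dec z r); [rewrite x_below_r; auto; lra |].
      assert (phi r <= phi z) by (apply phi_nondecr; lra). lra.
  - rewrite <- (x_below_r t 0) at 1 by (auto; lra).
    apply (comp_phi_inv_ge _ _ 1 Hbound); [lra | now left].
Qed.

Lemma burn_below_r t v : (1 <= t)%nat -> 0 <= v < r -> burn t v = 0.
Proof.
  intros Ht Hv. unfold burn. rewrite RS_int_x, x_below_r by (auto; lra).
  rewrite (RInt_ext _ (fun _ => 0)); [rewrite RInt_const_R; ring |].
  intros s Hs. assert (phi v <= phi r) by (apply phi_nondecr; lra).
  rewrite Rmin_right, Rmax_left in Hs by lra.
  apply comp_phi_inv_x_below; auto; lra.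
Qed.

Lemma burn_at_r t : (1 <= t)%nat -> burn t r = phi r * x t r.
Proof.
  intros Ht. unfold burn. rewrite RS_int_x, RInt_point by auto.
  unfold zero; simpl. ring.
Qed.

Lemma burn_diff t u w : (1 <= t)%nat -> 0 <= u -> 0 <= w ->
  burn t w - burn t u
  = phi w * x t w - phi u * x t u - RInt (comp_phi_inv (x t) phi) (phi u) (phi w).
Proof.
  intros Ht Hu Hw. unfold burn. rewrite !RS_int_x by auto.
  rewrite <- (RInt_Chasles_R _ (phi r) (phi u) (phi w)) by apply ex_RInt_comp_phi_inv_x, Ht.
  ring.
Qed.

Lemma burn_nondecr t u w : (1 <= t)%nat -> 0 <= u -> u <= w -> burn t u <= burn t w.
Proof.
  intros Ht Hu Huw.
  assert (Habove : forall a b, r <= a -> a <= b -> burn t a <= burn t b).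
  { intros a b Ha Hab.
    assert (Hd := burn_diff t a b Ht ltac:(lra) ltac:(lra)).
    destruct (RInt_comp_phi_inv_x_bounds t a b Ht ltac:(lra) Hab).
    assert (phi a <= phi b) by (apply phi_nondecr; lra).
    assert (x t a <= x t b) by (apply x_nondecr; auto; lra).
    assert (0 <= phi a) by (apply phi_ge0_above; lra). nra. }
  assert (Hr : 0 <= burn t r).
  { rewrite burn_at_r by auto. apply Rmult_le_pos; [apply phi_ge0_above; lra |].
    apply x_between_0_1; auto. }
  destruct (Rlt_dec u r) as [Hur | Hur]; [| apply Habove; lra].
  rewrite (burn_below_r t u) by (auto; lra).
  destruct (Rlt_dec w r) as [Hwr | Hwr].
  - rewrite (burn_below_r t w) by (auto; lra). lra.
  - apply Rle_trans with (burn t r); [lra | apply Habove; lra].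
Qed.

Lemma burn_ge0 t v : (1 <= t)%nat -> 0 <= v -> 0 <= burn t v.
Proof.
  intros Ht Hv. destruct (Rlt_dec v r).
  - rewrite burn_below_r by (auto; lra). lra.
  - apply Rle_trans with (burn t r); [| apply burn_nondecr; auto; lra].
    rewrite burn_at_r by auto. apply Rmult_le_pos; [apply phi_ge0_above; lra |].
    apply x_between_0_1; auto.
Qed.

Lemma area_gap_le_burn t v : (1 <= t)%nat -> 0 <= v ->
  INR t * area_gap t v <= burn (S t) v.
Proof.
  intros Ht Hv. destruct (Rlt_dec v r) as [Hvr | Hvr].
  - rewrite area_gap_below_r, burn_below_r by (auto; lra). lra.
  - rewrite area_gap_RInt by auto. apply x_gap_area_le_burn; auto; lra.
Qed.

(* Since [phi v <= v], moving a bid from position [t] to [t+1] lowers its burn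
   by at most the payment [v (x t v - x (S t) v)] it loses. *)
Lemma burn_succ_drop t v : (1 <= t)%nat -> 0 <= v ->
  burn t v - burn (S t) v <= v * (x t v - x (S t) v).
Proof.
  intros Ht Hv. assert (Hxs := x_succ_le t v Ht Hv).
  destruct (Rlt_dec v r) as [Hvr | Hvr].
  - rewrite !burn_below_r by (lia || lra). nra.
  - unfold burn. rewrite !RS_int_x by (lia || lra).
    assert (RInt (comp_phi_inv (x (S t)) phi) (phi r) (phi v)
            <= RInt (comp_phi_inv (x t) phi) (phi r) (phi v)).
    { apply RInt_le; [apply phi_nondecr; lra | apply ex_RInt_comp_phi_inv_x; lia.. |].
      intros s _. apply (comp_phi_inv_le_fun _ _ _ 1).
      - intros z Hz; apply x_between_0_1; auto.
      - intros z Hz; apply x_between_0_1; auto.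
      - intros z Hz; apply x_succ_le; auto. }
    specialize (phi_le_id v Hv). nra.
Qed.

Lemma last_margin_diff_ge t a b : (1 <= t)%nat -> 0 <= a -> a <= b ->
  last_margin t b - last_margin t a >= - (x t b - x t a) * (phi b - phi a).
Proof.
  intros Ht Ha Hab. unfold last_margin.
  assert (HB := burn_diff t a b Ht Ha ltac:(lra)).
  destruct (RInt_comp_phi_inv_x_bounds t a b Ht Ha Hab) as [HG _].
  assert (HU : area t b - area t a = RInt (x t) a b).
  { unfold area. rewrite <- (RInt_Chasles_R _ r a b) by (apply ex_RInt_x; auto; lra). ring. }
  assert (HI : RInt (x t) a b <= (b - a) * x t b).
  { apply (RInt_bounds (x t) a b (x t a) (x t b) Hab); [apply ex_RInt_x; auto; lra |].
    intros z Hz; split; apply x_nondecr; auto; lra. }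
  assert (x t a <= x t b) by (apply x_nondecr; auto).
  assert (phi a <= a) by (apply phi_le_id; lra).
  nra.
Qed.

(* The defect [(x t b - x t a) (phi b - phi a)] is small relative to the
   increase of [x t] on short intervals, by uniform continuity of [phi]. *)
Lemma last_margin_nondecr t u w : (1 <= t)%nat -> 0 <= u -> u <= w ->
  last_margin t u <= last_margin t w.
Proof.
  intros Ht Hu Huw. apply le_of_local_bound with (X := x t); auto.
  - intros a b Ha Hab Hb. apply x_nondecr; auto; lra.
  - intros eta Heta.
    destruct (unif_cont_on_nonneg phi u w phi_cont Hu eta Heta) as [d [Hd Huc]].
    exists d. split; auto. intros a b Ha Hab Hb Hbd.
    assert (Hk := last_margin_diff_ge t a b Ht ltac:(lra) Hab).
    assert (Habs := Huc b a ltac:(lra) ltac:(lra) ltac:(rewrite Rabs_pos_eq; lra)).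
    assert (phi a <= phi b) by (apply phi_nondecr; lra).
    rewrite Rabs_pos_eq in Habs by lra.
    assert (x t a <= x t b) by (apply x_nondecr; auto; lra). nra.
Qed.

Lemma last_margin_ge0 t v : (1 <= t)%nat -> 0 <= v -> 0 <= last_margin t v.
Proof.
  intros Ht Hv. apply Rle_trans with (last_margin t 0); [| apply last_margin_nondecr; auto; lra].
  unfold last_margin. rewrite area_below_r by (auto; lra).
  destruct (Rlt_dec 0 r).
  - rewrite burn_below_r, x_below_r by (auto; lra). lra.
  - assert (Hr0 : r = 0) by lra.
    assert (Hb := burn_at_r t Ht). rewrite Hr0 in Hb. rewrite Hb.
    assert (phi 0 <= 0) by (apply phi_le_id; lra).
    assert (0 <= x t 0) by (apply x_between_0_1; auto; lra). nra.
Qed.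

Definition entry_revenue : nat -> bool -> nat -> R -> R := entry_term x area burn.
Local Notation block_revenue := (block_sum entry_revenue).

Lemma entry_revenue_real_shift n c v : (1 <= n)%nat -> 0 <= v ->
  entry_revenue (S n) true c v - entry_revenue n true c v
  <= INR (S c) * area_gap n v - INR c * area_gap (pred n) v.
Proof.
  intros Hn Hv. assert (Hdrop := burn_succ_drop n v Hn Hv).
  assert (E : entry_revenue (S n) true c v - entry_revenue n true c v
              = (INR (S c) * area_gap n v - INR c * area_gap (pred n) v)
                - (v * (x n v - x (S n) v) - (burn n v - burn (S n) v))).
  { unfold entry_revenue, entry_term, area_gap. destruct n as [| n]; [lia |].
    simpl pred. rewrite S_INR. ring. }
  lra.
Qed.

(* Moving a run of real bids one position down costs each of them at most the
   weighted area gap, which the first hypothesis keeps below [Q]. *)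
Lemma block_revenue_shift_real (Q : R) (Rs : list R) n c : 0 <= Q ->
  (2 <= n)%nat -> (c <= n - 1)%nat ->
  (forall v, In v Rs -> 0 <= v /\ INR (n - 1) * area_gap (n - 1) v <= Q) ->
  block_revenue (S n) c (as_real Rs) - block_revenue n c (as_real Rs)
  <= INR (n - 1 - c) * Q / INR (n - 1).
Proof.
  revert n c. induction Rs as [| v Rs IH]; intros n c HQ Hn Hc HRs; cbn [map block_sum].
  - assert (0 < INR (n - 1)) by (apply lt_0_INR; lia).
    assert (0 <= INR (n - 1 - c)) by apply pos_INR.
    rewrite Rminus_0_r. apply Rmult_le_pos; [nra | left; apply Rinv_0_lt_compat; lra].
  - destruct (HRs v (or_introl eq_refl)) as [Hv HvQ].
    assert (Hdecr : forall w, 0 <= w -> INR n * area_gap n w <= INR (n - 1) * area_gap (n - 1) w).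
    { intros w Hw. assert (H := area_gap_weighted_decr (n - 1) w ltac:(lia) Hw).
      replace (S (n - 1)) with n in H by lia. exact H. }
    assert (Hrest := IH (S n) (S c) HQ ltac:(lia) ltac:(lia)).
    replace (S n - 1)%nat with n in Hrest by lia.
    replace (n - S c)%nat with (n - 1 - c)%nat in Hrest by lia.
    specialize (Hrest ltac:(intros w Hw; destruct (HRs w (or_intror Hw)) as [Hw0 HwQ];
                            split; [exact Hw0 | specialize (Hdecr w Hw0); lra])).
    assert (Hfirst := entry_revenue_real_shift n c v ltac:(lia) Hv).
    replace (pred n) with (n - 1)%nat in Hfirst by lia.
    assert (Hstep := shift_step_bound (INR n) (INR c) (area_gap n v) (area_gap (n - 1) v) Q).
    rewrite !minus_INR in * by lia. rewrite S_INR in Hfirst. simpl INR in *.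
    assert (2 <= INR n) by (replace 2 with (INR 2) by (simpl; lra); apply le_INR; lia).
    assert (INR c <= INR n - 1) by (apply le_INR in Hc; rewrite minus_INR in Hc by lia; simpl in Hc; lra).
    specialize (Hstep ltac:(lra) ltac:(split; [apply pos_INR | lra])
                  ltac:(apply area_gap_ge0; auto; lia) (Hdecr v Hv) HvQ).
    lra.
Qed.

Lemma entry_revenue_fake p c y : (1 <= p)%nat ->
  entry_revenue p false c y = - burn p y + INR c * area_gap (p - 1) y.
Proof.
  intros Hp. unfold entry_revenue, entry_term, area_gap.
  replace (pred p) with (p - 1)%nat by lia. replace (S (p - 1)) with p by lia. ring.
Qed.

(* Without the fabricated top bid [y], the first real bid [v <= y] moves to the
   top, where its burn is at most the burn of [y] that disappears. *)
Lemma block_revenue_drop_fake_top y Rs : 0 <= y -> (forall v, In v Rs -> 0 <= v <= y) ->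
  block_revenue 1 0 ((y, false) :: as_real Rs) <= block_revenue 1 0 (as_real Rs).
Proof.
  intros Hy HRs. cbn [block_sum].
  rewrite entry_revenue_fake by lia. simpl INR. rewrite Rmult_0_l, Rplus_0_r.
  assert (HBy := burn_ge0 1 y ltac:(lia) Hy).
  destruct Rs as [| v Rs]; cbn [map block_sum]; [lra |].
  destruct (HRs v (or_introl eq_refl)) as [Hv Hvy].
  assert (Hrest := block_revenue_shift_real (area_gap 1 y) Rs 2 1
                     ltac:(apply area_gap_ge0; auto; lia) ltac:(lia) ltac:(lia)).
  simpl (2 - 1)%nat in Hrest. simpl (1 - 1)%nat in Hrest. simpl INR in Hrest.
  specialize (Hrest ltac:(intros w Hw; destruct (HRs w (or_intror Hw));
                          split; [lra | rewrite Rmult_1_l; apply area_gap_nondecr; auto; lra])).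
  assert (Hgap := area_gap_le_burn 1 v ltac:(lia) Hv). simpl INR in Hgap.
  assert (HB := burn_nondecr 1 v y ltac:(lia) Hv Hvy).
  assert (0 <= v * (x 1%nat v - x 2%nat v))
    by (apply Rmult_le_pos; [| assert (H := x_succ_le 1 v ltac:(lia) Hv)]; lra).
  assert (E : entry_revenue 2 true 0 v - entry_revenue 1 true 0 v
              = - v * (x 1%nat v - x 2%nat v) + area_gap 1 v + burn 1 v - burn 2 v).
  { unfold entry_revenue, entry_term, area_gap. simpl. ring. }
  unfold Rdiv in Hrest. rewrite !Rmult_0_l in Hrest.
  lra.
Qed.

(* A fabricated bid [y] at position [p > 1] below [c] real bids: its burn
   outweighs both the area gap it imposes on the [c] real bids above and, by
   the previous lemma, the gain of the real bids below moving up. *)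
Lemma block_revenue_drop_fake_lower p c y Rs : (2 <= p)%nat -> (c <= p - 1)%nat -> 0 <= y ->
  (forall v, In v Rs -> 0 <= v <= y) ->
  block_revenue p c ((y, false) :: as_real Rs) <= block_revenue p c (as_real Rs).
Proof.
  intros Hp Hc Hy HRs. cbn [block_sum]. rewrite entry_revenue_fake by lia.
  set (G := area_gap (p - 1) y).
  assert (HG : 0 <= G) by (apply area_gap_ge0; auto; lia).
  assert (Hshift := block_revenue_shift_real (INR (p - 1) * G) Rs p c
                      ltac:(apply Rmult_le_pos; [apply pos_INR | exact HG]) Hp Hc).
  specialize (Hshift ltac:(intros w Hw; destruct (HRs w Hw); split; [lra |];
                           apply Rmult_le_compat_l; [apply pos_INR |];
                           apply area_gap_nondecr; auto; lia)).
  replace (INR (p - 1 - c) * (INR (p - 1) * G) / INR (p - 1)) with (INR (p - 1 - c) * G)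
    in Hshift by (field; apply not_0_INR; lia).
  assert (Hburn := area_gap_le_burn (p - 1) y ltac:(lia) Hy).
  replace (S (p - 1)) with p in Hburn by lia. fold G in Hburn.
  rewrite !minus_INR in * by lia.
  lra.
Qed.

Lemma block_revenue_drop_fake p c y Rs : (1 <= p)%nat -> (c <= p - 1)%nat -> 0 <= y ->
  (forall v, In v Rs -> 0 <= v <= y) ->
  block_revenue p c ((y, false) :: as_real Rs) <= block_revenue p c (as_real Rs).
Proof.
  intros Hp Hc Hy HRs. destruct (Nat.eq_dec p 1) as [-> | Hp1].
  - replace c with 0%nat by lia. apply block_revenue_drop_fake_top; auto.
  - apply block_revenue_drop_fake_lower; auto; lia.
Qed.

(* Delete the lowest fabricated bid; everything below it is real. *)
Lemma block_revenue_drop_fakes blk : StronglySorted Rge (map fst blk) ->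
  (forall e, In e blk -> 0 <= fst e) ->
  block_revenue 1 0 blk <= block_revenue 1 0 (filter snd blk).
Proof.
  remember (length blk) as n eqn:Hn. revert blk Hn.
  induction n as [n IH] using lt_wf_ind. intros blk Hn Hs Hpos.
  destruct (classic (exists e, In e blk /\ snd e = false)) as [Hf | Hf].
  - destruct (split_last_fake blk Hf) as [A [y [Rs ->]]].
    set (blk' := A ++ as_real Rs).
    rewrite map_app in Hs. simpl in Hs. destruct (StronglySorted_remove _ _ _ Hs) as [Hs' Hy].
    assert (Hpos' : forall e, In e blk' -> 0 <= fst e).
    { intros e He. apply Hpos. apply in_app_or in He. apply in_or_app.
      destruct He; [left | right; right]; auto. }
    apply Rle_trans with (block_revenue 1 0 blk').
    + unfold blk'. rewrite !block_sum_app. apply Rplus_le_compat_l.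
      assert (count_real A <= length A)%nat by apply count_real_le.
      apply block_revenue_drop_fake; [lia | lia | |].
      * apply (Hpos (y, false)). apply in_or_app; right; left; reflexivity.
      * intros v Hv. split.
        -- apply (Hpos' (v, true)). apply in_or_app; right. apply in_map_iff. exists v; auto.
        -- apply Hy. rewrite map_map, map_id. exact Hv.
    + replace (filter snd (A ++ (y, false) :: as_real Rs)) with (filter snd blk')
        by (unfold blk'; rewrite !filter_app; reflexivity).
      apply (IH (length blk')); auto.
      * subst n. unfold blk'. rewrite !length_app. simpl. lia.
      * unfold blk'. rewrite map_app. exact Hs'.
  - rewrite forallb_filter_id; [lra |].
    apply forallb_forall. intros [v b] He. destruct b; [reflexivity |].
    exfalso. apply Hf. exists (v, false). auto.
Qed.

Lemma entry_revenue_honest n v : (1 <= n)%nat ->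
  entry_revenue n true (n - 1) v = last_margin n v + INR (n - 1) * area_gap (n - 1) v.
Proof.
  intros Hn. unfold entry_revenue, entry_term, last_margin, area_gap.
  replace (pred n) with (n - 1)%nat by lia. replace (S (n - 1)) with n by lia. ring.
Qed.

Lemma entry_revenue_honest_ge0 n v : (1 <= n)%nat -> 0 <= v ->
  0 <= entry_revenue n true (n - 1) v.
Proof.
  intros Hn Hv. rewrite entry_revenue_honest by auto.
  assert (0 <= last_margin n v) by (apply last_margin_ge0; auto).
  destruct (Nat.eq_dec n 1) as [-> | Hn1]; [simpl; lra |].
  assert (0 <= area_gap (n - 1) v) by (apply area_gap_ge0; auto; lia).
  assert (0 <= INR (n - 1)) by apply pos_INR. nra.
Qed.

Lemma entry_revenue_honest_nondecr n u w : (1 <= n)%nat -> 0 <= u -> u <= w ->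
  entry_revenue n true (n - 1) u <= entry_revenue n true (n - 1) w.
Proof.
  intros Hn Hu Huw. rewrite !entry_revenue_honest by auto.
  assert (last_margin n u <= last_margin n w) by (apply last_margin_nondecr; auto).
  destruct (Nat.eq_dec n 1) as [-> | Hn1]; [simpl; lra |].
  assert (area_gap (n - 1) u <= area_gap (n - 1) w) by (apply area_gap_nondecr; auto; lia).
  assert (0 <= INR (n - 1)) by apply pos_INR. nra.
Qed.

Lemma honest_revenue_ge0 W n : (1 <= n)%nat -> (forall v, In v W -> 0 <= v) ->
  0 <= block_revenue n (n - 1) (as_real W).
Proof.
  revert n. induction W as [| w W IH]; intros n Hn HW; cbn [map block_sum]; [lra |].
  replace (S (n - 1)) with (S n - 1)%nat by lia.
  assert (0 <= entry_revenue n true (n - 1) w)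
    by (apply entry_revenue_honest_ge0; auto; apply HW; left; auto).
  assert (0 <= block_revenue (S n) (S n - 1) (as_real W))
    by (apply IH; [lia | intros; apply HW; right; auto]).
  lra.
Qed.

Lemma honest_revenue_dominated Sl W n : (1 <= n)%nat ->
  (length Sl <= length W)%nat -> (forall i, (i < length Sl)%nat -> nth i Sl 0 <= nth i W 0) ->
  (forall v, In v Sl -> 0 <= v) -> (forall v, In v W -> 0 <= v) ->
  block_revenue n (n - 1) (as_real Sl) <= block_revenue n (n - 1) (as_real W).
Proof.
  revert W n. induction Sl as [| s Sl IH]; intros W n Hn Hl Hi HSp HWp.
  - apply honest_revenue_ge0; auto.
  - destruct W as [| w W]; simpl in Hl; [lia |]. cbn [map block_sum].
    replace (S (n - 1)) with (S n - 1)%nat by lia.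
    assert (entry_revenue n true (n - 1) s <= entry_revenue n true (n - 1) w).
    { apply entry_revenue_honest_nondecr; auto; [apply HSp; left; auto |].
      apply (Hi 0%nat). simpl; lia. }
    assert (block_revenue (S n) (S n - 1) (as_real Sl) <= block_revenue (S n) (S n - 1) (as_real W)).
    { apply IH; [lia | lia | | |].
      - intros i Hi'. apply (Hi (S i)). simpl; lia.
      - intros; apply HSp; right; auto.
      - intros; apply HWp; right; auto. }
    lra.
Qed.

Lemma miner_revenue_block_revenue blk : (forall e, In e blk -> 0 <= fst e) ->
  miner_revenue phi x blk = block_revenue 1 0 blk.
Proof.
  intros Hpos. unfold miner_revenue. cbv zeta. rewrite r_is_phi_inv.
  set (n := length blk).
  set (V := fun k => nth k (map fst blk) r).
  assert (HV : forall k, 0 <= V k).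
  { intros k. unfold V. destruct (Nat.lt_ge_cases k n) as [Hk | Hk].
    - rewrite nth_map_fst by auto. apply Hpos, nth_In, Hk.
    - rewrite nth_overflow; [lra | rewrite length_map; auto]. }
  assert (Hpay : forall k, (k < n)%nat -> gpa_payment x r (map fst blk) k =
     V k * x (S k) (V k) - sumR (fun j => area (S j) (V j) - area (S j) (V (S j))) k (n - k)).
  { intros k Hk. unfold gpa_payment. rewrite length_map. fold n. f_equal.
    apply sumR_ext. intros j Hj. unfold area. fold (V j) (V (S j)).
    assert (E := RInt_Chasles_R (x (S j)) r (V (S j)) (V j)
                   ltac:(apply ex_RInt_x; auto; lia) ltac:(apply ex_RInt_x; auto; lia)).
    lra. }
  rewrite (sumR_ext _ (fun k => if flag_at blk k
      then V k * x (S k) (V k) - sumR (fun j => area (S j) (V j) - area (S j) (V (S j))) k (n - k)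
      else 0)) by (intros k Hk; unfold flag_at; rewrite Hpay by lia; reflexivity).
  unfold gpa_burn. rewrite length_map. fold n.
  change (sumR (fun k => phi (nth k (map fst blk) r) * x (S k) (nth k (map fst blk) r)
                         - RS_int (x (S k)) phi r (nth k (map fst blk) r)) 0 n)
    with (sumR (fun k => burn (S k) (V k)) 0 n).
  rewrite revenue_by_entries.
  replace (V n) with r by (unfold V; symmetry; apply nth_overflow; rewrite length_map; unfold n; lia).
  unfold area at 2. rewrite RInt_point. unfold zero; simpl. rewrite Rmult_0_r, Rplus_0_r.
  rewrite block_sum_as_sumR. fold n. apply sumR_ext. intros k Hk.
  unfold V. rewrite nth_map_fst by (unfold n in Hk; lia). reflexivity.
Qed.

(* Censoring and fabricating only lose revenue: after the fabricated bids are
   deleted, the real bids left form a sub-multiset of the true bids, whose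
   sorted sequence dominates theirs entrywise. *)
Theorem on_chain_miner_simple_of_hyps : on_chain_miner_simple phi x.
Proof.
  intros b Hb blk hon [Hs [[rest Hperm] Hfake]] [Hs2 [Hperm2 Hall]].
  assert (Hposb : forall e, In e blk -> 0 <= fst e).
  { intros [v c] He. destruct c; [| apply (Hfake (v, false)); auto].
    apply Hb. apply Permutation_in with (map fst (filter snd blk) ++ rest); [apply Permutation_sym; auto |].
    apply in_or_app. left. apply in_map_iff. exists (v, true). split; auto. apply filter_In. auto. }
  assert (Hposh : forall e, In e hon -> 0 <= fst e).
  { intros e He. apply Hb. apply Permutation_in with (map fst hon); [apply Permutation_sym; auto |].
    apply in_map; auto. }
  rewrite !miner_revenue_block_revenue by auto.
  assert (Hge_trans : Transitive Rge) by (intros u v w; lra).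
  assert (HSS := Sorted_StronglySorted Hge_trans Hs).
  assert (HSS2 := Sorted_StronglySorted Hge_trans Hs2).
  eapply Rle_trans; [apply block_revenue_drop_fakes; auto |].
  rewrite (all_real_as_real (filter snd blk)) by (intros e He; apply filter_In in He; tauto).
  rewrite (all_real_as_real hon Hall).
  destruct (sorted_submultiset_dominated (map fst (filter snd blk)) (map fst hon) rest
              (StronglySorted_filter_real blk HSS) HSS2 (Permutation_trans (Permutation_sym Hperm2) Hperm))
    as [Hl Hi].
  apply (honest_revenue_dominated _ _ 1); auto.
  - intros v Hv. rewrite in_map_iff in Hv. destruct Hv as [e [<- He]].
    apply Hposb. apply filter_In in He. tauto.
  - intros v Hv. rewrite in_map_iff in Hv. destruct Hv as [e [<- He]]. auto.
Qed.

End MinerRevenue.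

(** * The zero of the virtual value *)

Section PhiInvZero.

Variable phi : R -> R.
Hypothesis phi_nondecr : forall v w, 0 <= v -> v <= w -> phi v <= phi w.
Hypothesis phi_cont : continuous_on_nonneg phi.
Hypothesis phi_pos : exists w, 0 <= w /\ 0 < phi w.

(* When [phi] is nonnegative on [0, +oo) the supremum is over the empty set
   and [phi_inv phi 0 = real m_infty = 0]. *)
Lemma phi_inv_zero_spec :
  0 <= phi_inv phi 0 /\
  (forall v, 0 <= v -> phi v < 0 -> v <= phi_inv phi 0) /\
  (forall B, 0 <= B -> (forall v, 0 <= v -> phi v < 0 -> v <= B) -> phi_inv phi 0 <= B).
Proof.
  unfold phi_inv. set (E := fun v => 0 <= v /\ phi v < 0).
  destruct (classic (exists v0, E v0)) as [[v0 Hv0] | Hne].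
  - destruct phi_pos as [w [Hw Hpw]].
    assert (HEw : forall v, E v -> v <= w).
    { intros v [Hv Hpv]. destruct (Rle_dec v w) as [| Hvw]; auto.
      assert (phi w <= phi v) by (apply phi_nondecr; lra). lra. }
    destruct (Lub_Rbar_bounded E v0 w Hv0 HEw) as [Hub Hlub].
    split; [| split].
    + apply Rle_trans with v0; [apply Hv0 | apply Hub, Hv0].
    + intros v Hv Hpv. apply Hub. split; auto.
    + intros B _ HB. apply Hlub. intros v [Hv Hpv]. auto.
  - destruct (Lub_Rbar_correct E) as [_ Hl].
    assert (Hm : Rbar_le (Lub_Rbar E) m_infty)
      by (apply Hl; intros v Hv; exfalso; apply Hne; exists v; auto).
    destruct (Lub_Rbar E); simpl in Hm; try contradiction; simpl.
    split; [lra | split; [| auto]].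
    intros v Hv Hpv. exfalso. apply Hne. exists v. split; auto.
Qed.

Lemma phi_lt0_below_phi_inv v : 0 <= v -> v < phi_inv phi 0 -> phi v < 0.
Proof.
  intros Hv Hvr. apply Rnot_le_lt. intro Hpv.
  destruct phi_inv_zero_spec as [_ [_ Hlub]].
  assert (phi_inv phi 0 <= v); [| lra].
  apply Hlub; auto. intros e He Hpe. destruct (Rle_dec e v) as [| Hev]; auto.
  assert (phi v <= phi e) by (apply phi_nondecr; lra). lra.
Qed.

(* If [phi v < 0], continuity keeps [phi] negative a little to the right of [v],
   past [phi_inv phi 0]. *)
Lemma phi_ge0_above_phi_inv v : phi_inv phi 0 <= v -> 0 <= phi v.
Proof.
  intros Hrv. destruct phi_inv_zero_spec as [Hr0 [Hub _]].
  apply Rnot_lt_le. intro Hneg.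
  assert (Hc := phi_cont v ltac:(lra)).
  apply filterlim_locally with (eps := mkposreal (- phi v) ltac:(lra)) in Hc.
  destruct Hc as [d Hd]. simpl in Hd.
  set (y := v + d / 2).
  assert (Hd2 : 0 < d / 2) by (generalize (cond_pos d); lra).
  assert (Hball : ball v d y).
  { unfold ball; simpl; unfold AbsRing_ball, abs, minus, plus, opp; simpl.
    unfold y. replace (v + d / 2 + - v) with (d / 2) by ring.
    rewrite Rabs_pos_eq by lra. generalize (cond_pos d); lra. }
  specialize (Hd y Hball ltac:(unfold y; lra)).
  unfold ball in Hd; simpl in Hd; unfold AbsRing_ball, abs, minus, plus, opp in Hd; simpl in Hd.
  apply Rabs_lt_between in Hd.
  assert (y <= phi_inv phi 0) by (apply Hub; [unfold y; lra | lra]).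
  unfold y in *. lra.
Qed.

End PhiInvZero.

Lemma cdf_le_1 F f v : is_distribution F f -> 0 <= v -> F v <= 1.
Proof.
  intros [Hf [HF Hlim]] Hv.
  assert (Hmono : forall w, v <= w -> F v <= F w).
  { intros w Hw. destruct (HF v Hv) as [Hex1 HF1]. destruct (HF w ltac:(lra)) as [Hex2 HF2].
    rewrite HF1, HF2.
    assert (Hex3 : ex_RInt f v w) by (apply (ex_RInt_Chasles_2 f 0 v w); auto; lra).
    rewrite <- (RInt_Chasles_R f 0 v w Hex1 Hex3).
    assert (0 <= RInt f v w) by (apply RInt_ge_0; auto). lra. }
  apply Rnot_lt_le. intro Hgt.
  apply is_lim_spec in Hlim. simpl in Hlim.
  destruct (Hlim (mkposreal (F v - 1) ltac:(lra))) as [M HM]. simpl in HM.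
  specialize (HM (Rmax v (M + 1)) ltac:(generalize (Rmax_r v (M + 1)); lra)).
  specialize (Hmono (Rmax v (M + 1)) (Rmax_l _ _)).
  rewrite Rabs_pos_eq in HM by lra. lra.
Qed.

(* This also covers [f v = 0], where Rocq's division gives [phi v = v]. *)
Lemma virtual_value_le F f v : is_distribution F f -> 0 <= v -> virtual_value F f v <= v.
Proof.
  intros HD Hv. unfold virtual_value.
  assert (H1 := cdf_le_1 F f v HD Hv). destruct HD as [Hf _]. specialize (Hf v).
  destruct (Req_dec (f v) 0) as [H0 | H0].
  - unfold Rdiv. rewrite H0, Rinv_0. lra.
  - assert (0 <= (1 - F v) / f v) by (apply Rdiv_le_0_compat; lra). lra.
Qed.

Theorem theorem6p11 (F f : R -> R) (x : nat -> R -> R) :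
  is_distribution F f ->
  smooth_regular F f ->
  unbounded_virtual_value F f ->
  is_GPA (virtual_value F f) x ->
  (forall t w, (1 <= t)%nat -> 0 <= w ->
     INR t * (x t w - x (S t) w) >= INR (S t) * (x (S t) w - x (S (S t)) w)) ->
  (forall t w, (1 <= t)%nat -> phi_inv (virtual_value F f) 0 <= w ->
     INR t * RInt (fun z => x t z - x (S t) z) (phi_inv (virtual_value F f) 0) w
     <= virtual_value F f w * x (S t) w
        - RS_int (x (S t)) (virtual_value F f) (phi_inv (virtual_value F f) 0) w) ->
  on_chain_miner_simple (virtual_value F f) x.
Proof.
  intros HD [Hmono [Hcont _]] Hunb HGPA Hgap Hburn.
  set (phi := virtual_value F f) in *.
  assert (Hpos : exists w, 0 <= w /\ 0 < phi w).
  { destruct (Hunb 0) as [w Hw]. exists w. exact Hw. }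
  destruct (phi_inv_zero_spec phi Hmono Hpos) as [Hr0 _].
  apply (on_chain_miner_simple_of_hyps phi x (phi_inv phi 0)); auto.
  - intros v Hv. apply virtual_value_le; auto.
  - intros v Hv Hvr. apply phi_lt0_below_phi_inv; auto.
  - intros v Hv. apply phi_ge0_above_phi_inv; auto.
Qed.
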